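(* Let $\phi:B_E\to B_E$ be analytic. For each $z\in B_E$ with $\phi(z)\neq 0$ there is $\eta(z) \in E$ with $\|\eta(z)\|=1$ and $\langle \phi(z),\eta(z)\rangle=0$ such that, for $\xi =\phi(z) + \sqrt{1 - \|\phi(z)\|^2}\,\eta(z)$, $$|\langle\mathcal R\phi(z),\xi\rangle|\ge\sqrt{1 - \|\phi(z)\|^2}\, \|\mathcal R\phi(z)\| -\Big(1 + \frac{\sqrt{1 - \|\phi(z)\|^2}}{\|\phi(z)\|}\Big) |\langle \mathcal R\phi(z),\phi(z)\rangle|.$$
   Context: $E$ is a complex Hilbert space of arbitrary dimension with inner product $\langle\cdot,\cdot\rangle$ and open unit ball $B_E$; $\mathcal R\phi(z)=\phi'(z)(z)$ is the radial derivative of $\phi$. *)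

(* The complex field is  R[i]  (mathcomp-real-closed
   [complex]) for an arbitrary  R : realType; a complex Hilbert space is a
   complete normed R[i]-module whose norm is induced by an inner product. *)
From HB Require Import structures.
From mathcomp Require Import all_boot all_order all_algebra.
From mathcomp Require Import all_classical all_reals all_analysis.
From mathcomp Require Export complex.
Import Order.TTheory GRing.Theory Num.Theory.
Import numFieldNormedType.Exports.
Local Open Scope ring_scope.
Local Open Scope complex_scope.

Set Implicit Arguments.
Unset Strict Implicit.
Unset Printing Implicit Defensive.

Section Hilbert.
Variable R : realType.
Variable E : completeNormedModType R[i].

Definition is_inner_product (ip : E -> E -> R[i]) : Prop :=
  [/\ (forall (a : R[i]) (x y w : E), ip (a *: x + y) w = a * ip x w + ip y w),
      (forall x y : E, ip y x = (ip x y)^*) &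
      (forall x : E, ip x x = `|x| ^+ 2)].

Definition unit_ball : set E := [set z | `|z| < 1].

(** phi is analytic (= Frechet C-differentiable, i.e. holomorphic) on B_E *)
Definition analytic_on_ball (phi : E -> E) : Prop :=
  forall z, unit_ball z -> differentiable phi z.

Definition maps_ball (phi : E -> E) : Prop :=
  forall z, unit_ball z -> unit_ball (phi z).

Definition radial_derivative (phi : E -> E) (z : E) : E := 'd phi z z.

End Hilbert.

From HB Require Import structures.
From mathcomp Require Import all_boot all_order all_algebra.
From mathcomp Require Import all_classical all_reals all_analysis.
From mathcomp Require Import complex ring.
Import Order.TTheory GRing.Theory Num.Theory.
Import numFieldNormedType.Exports.
Local Open Scope ring_scope.
Local Open Scope complex_scope.
Set Implicit Arguments.

(* The statement is pure Hilbert-space geometry at the two vectors p = phi(z)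
   and w = R phi(z).  Split w = c p + y with y orthogonal to p and choose the
   unit vector eta in the direction of y (any unit vector orthogonal to p if
   y = 0).  Then |<w,eta>| = ||y|| >= ||w|| - |<w,p>|/||p||, and the triangle
   inequality applied to <w,xi> = <w,p> + s <w,eta> (s real, nonnegative as
   ||p|| < 1) gives the bound. *)

Section InnerProductSpace.
Variables (R : realType) (E : completeNormedModType R[i]) (ip : E -> E -> R[i]).
Hypothesis ip_inner : is_inner_product ip.

Lemma ipDl x y w : ip (x + y) w = ip x w + ip y w.
Proof. by case: ip_inner => ipl _ _; have := ipl 1 x y w; rewrite scale1r mul1r. Qed.

Lemma ip0l w : ip 0 w = 0.
Proof. by apply/(addrI (ip 0 w)); rewrite -ipDl !addr0. Qed.

Lemma ipZl a x w : ip (a *: x) w = a * ip x w.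
Proof. by case: ip_inner => ipl _ _; have := ipl a x 0 w; rewrite addr0 ip0l addr0. Qed.

Lemma ipC x y : ip y x = (ip x y)^*.
Proof. by case: ip_inner. Qed.

Lemma ip_normE x : ip x x = `|x| ^+ 2.
Proof. by case: ip_inner. Qed.

Lemma ipDr x y w : ip w (x + y) = ip w x + ip w y.
Proof. by rewrite ipC ipDl rmorphD /= -!ipC. Qed.

Lemma ipZr a x w : ip w (a *: x) = a^* * ip w x.
Proof. by rewrite ipC ipZl rmorphM /= -ipC. Qed.

Definition orth_comp (p x : E) : E := x - (ip x p / `|p| ^+ 2) *: p.

Lemma orth_compE p x : x = (ip x p / `|p| ^+ 2) *: p + orth_comp p x.
Proof. by rewrite /orth_comp addrC subrK. Qed.

Lemma ip_orth_comp p x : p != 0 -> ip (orth_comp p x) p = 0.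
Proof.
move=> p0; rewrite /orth_comp ipDl -scaleNr ipZl ip_normE mulNr divfK ?subrr //.
by rewrite expf_neq0 // normr_eq0.
Qed.

Lemma unit_orth_aligned p y : y != 0 -> ip y p = 0 ->
  exists eta, [/\ `|eta| = 1, ip p eta = 0 & `|ip y eta| = `|y|].
Proof.
move=> y0 yp; have ny0 : `|y| != 0 by rewrite normr_eq0.
exists (`|y|^-1 *: y); split.
- by rewrite normrZ normfV normr_id mulVf.
- by rewrite ipZr ipC yp rmorph0 !mulr0.
- rewrite ipZr ip_normE normrM norm_conjC normfV normr_id normrX normr_id.
  by rewrite expr2 mulrA mulVf // mul1r.
Qed.

Hypothesis dim_ge2 : exists u v : E, [/\ u != 0, v != 0 & ip u v = 0].

Lemma exists_unit_orth p : p != 0 -> exists eta, `|eta| = 1 /\ ip p eta = 0.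
Proof.
move=> p0; suff [x x0] : exists x, orth_comp p x != 0.
  by have [eta [? ? _]] := unit_orth_aligned x0 (ip_orth_comp p x p0); exists eta.
case: dim_ge2 => u [v [u0 v0 uv]].
have [uE|] := eqVneq (orth_comp p u) 0; last by exists u.
exists v; set c := ip u p / `|p| ^+ 2.
have {}uE : u = c *: p by rewrite [LHS](orth_compE p) uE addr0.
have c0 : c != 0 by apply: contraNneq u0 => c0; rewrite uE c0 scale0r.
have pv : ip p v = 0.
  by apply/eqP; move: uv; rewrite uE ipZl => /eqP; rewrite mulf_eq0 (negbTE c0).
by rewrite /orth_comp ipC pv rmorph0 mul0r scale0r subr0.
Qed.

Lemma exists_unit_orth_norming p w : p != 0 ->
  exists eta, [/\ `|eta| = 1, ip p eta = 0 & `|orth_comp p w| <= `|ip w eta|].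
Proof.
move=> p0; have [y0|y0] := eqVneq (orth_comp p w) 0.
  have [eta [eta1 peta]] := exists_unit_orth p p0.
  by exists eta; rewrite y0 normr0.
have [eta [eta1 peta yeta]] := unit_orth_aligned y0 (ip_orth_comp p w p0).
exists eta; split => //.
by rewrite {2}[w](orth_compE p) ipDl ipZl peta mulr0 add0r yeta.
Qed.

Lemma norm_le_orth_decomp p w eta : p != 0 ->
  `|orth_comp p w| <= `|ip w eta| -> `|w| <= `|ip w p| / `|p| + `|ip w eta|.
Proof.
move=> p0 yeta; have r0 : `|p| != 0 by rewrite normr_eq0.
rewrite {1}[w](orth_compE p); apply: le_trans (ler_normD _ _) (lerD _ yeta).
by rewrite normrZ normrM normfV normrX normr_id expr2 invfM mulrA mulfVK.
Qed.

Lemma ip_shift_lower_bound p w eta (s : R[i]) : p != 0 -> 0 <= s ->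
  `|w| <= `|ip w p| / `|p| + `|ip w eta| ->
  s * `|w| - (1 + s / `|p|) * `|ip w p| <= `|ip w (p + s *: eta)|.
Proof.
move=> p0 s_ge0 w_le; have r0 : `|p| != 0 by rewrite normr_eq0.
rewrite ipDr ipZr (addrC (ip w p)); apply: le_trans (lerB_normD _ _).
rewrite normrM norm_conjC (ger0_norm s_ge0).
have -> : s * `|ip w eta| - `|ip w p| =
  s * (`|ip w p| / `|p| + `|ip w eta|) - (1 + s / `|p|) * `|ip w p| by field.
by rewrite lerD2r (ler_wpM2l s_ge0).
Qed.

End InnerProductSpace.

Theorem lemma4p3 (R : realType) (E : completeNormedModType R[i])
  (ip : E -> E -> R[i]) (Hip : is_inner_product ip)
  (Hdim : exists u v : E, [/\ u != 0, v != 0 & ip u v = 0])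
  (phi : E -> E) (Hanal : analytic_on_ball phi) (Hmaps : maps_ball phi)
  (z : E) (Hz : unit_ball z) (Hphiz : phi z != 0) :
  exists eta : E,
    [/\ `|eta| = 1, ip (phi z) eta = 0 &
      let s := sqrtC (1 - `|phi z| ^+ 2) in
      let xi := phi z + s *: eta in
      s * `|radial_derivative phi z|
        - (1 + s / `|phi z|) * `|ip (radial_derivative phi z) (phi z)|
      <= `|ip (radial_derivative phi z) xi| ].
Proof.
have phiz_lt1 : `|phi z| < 1 := Hmaps z Hz.
have [eta [eta1 phiz_eta w_le]] :=
  exists_unit_orth_norming Hip Hdim (phi z) (radial_derivative phi z) Hphiz.
exists eta; split => // s xi.
have s_ge0 : 0 <= s by rewrite sqrtC_ge0 subr_ge0 exprn_ile1 // ltW.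
have w_le' := norm_le_orth_decomp E ip _ _ _ Hphiz w_le.
exact: ip_shift_lower_bound Hip _ _ _ _ Hphiz s_ge0 w_le'.
Qed.
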